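(* Let $n,m,p\ge1$, let $A:\mathbb{R}^p\to\mathbb{R}^{n\times n}$, $B:\mathbb{R}^p\to\mathbb{R}^{n\times m}$ be known affine functions, and let $Q\in\mathbb{R}^{n\times n}$, $R\in\mathbb{R}^{m\times m}$ be symmetric positive definite. Consider the system $$x_{k+1}=A(\theta_k)x_k+B(\theta_k)u_k+w_k,\qquad k\in\mathbb{N},$$ with state $x_k\in\mathbb{R}^n$, input $u_k\in\mathbb{R}^m$, disturbance $w_k\in\mathbb{R}^n$ and time-varying parameter $\theta_k\in\mathbb{R}^p$. Assume: (i) there is $\bar W\ge0$ with $\|w_k\|\le\bar W$ for all $k$; (ii) there is a known compact convex set $\Theta\subset\mathbb{R}^p$ with $\theta_k\in\Theta$ for all $k$, such that $(A(\theta),B(\theta))$ is stabilizable for every $\theta\in\Theta$. Let $\mu>0$ and let $\{\hat\theta_k\}\subset\Theta$ be any sequence of parameter estimates, and apply the certainty-equivalent LQR input $u_k=K_{\mathrm{LQR}}(\hat\theta_k)x_k$. Define the nominal prediction $\hat x_{1|k}=A(\hat\theta_k)x_k+B(\hat\theta_k)u_k$ and prediction error $e_{1|k}=x_{k+1}-\hat x_{1|k}-w_k$. Suppose that the estimates satisfy $$\|\hat\theta_{k+1}-\hat\theta_k\|\le\sqrt{\mu}\,\|e_{1|k}+w_k\|\quad\text{for all }k\in\mathbb{N},$$ and that the state is uniformly bounded: $\|x_k\|\le X$ for all $k\in\mathbb{N}$, for some $X>0$. Then there exist constants $\alpha,\beta,\gamma>0$ such that, with $V(x,\theta)=x^\top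 P(\theta)x$, $$V(x_{k+1},\hat\theta_{k+1})-V(x_k,\hat\theta_k)\le-\alpha\|x_k\|^2+\beta\|e_{1|k}\|^2+\gamma\|w_k\|^2\quad\text{for all }k\in\mathbb{N}.$$
   Context: For $\theta\in\Theta$, $P(\theta)$ denotes the unique positive definite solution of the discrete-time algebraic Riccati equation $P = A(\theta)^\top P A(\theta) - A(\theta)^\top P B(\theta)(R+B(\theta)^\top P B(\theta))^{-1}B(\theta)^\top P A(\theta) + Q$, and $K_{\mathrm{LQR}}(\theta) = -(R+B(\theta)^\top P(\theta)B(\theta))^{-1}B(\theta)^\top P(\theta)A(\theta)$ is the corresponding LQR gain. $\|\cdot\|$ is the Euclidean norm on vectors and the spectral norm on matrices; $\mathbb{N}=\{0,1,2,\dots\}$. *)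

From HB Require Import structures.
From mathcomp Require Import all_boot all_order all_algebra.
From mathcomp Require Import all_classical all_reals all_analysis.
Set Implicit Arguments. Unset Strict Implicit. Unset Printing Implicit Defensive.
Import Order.TTheory GRing.Theory Num.Theory.
Import numFieldNormedType.Exports.
Local Open Scope ring_scope.
Local Open Scope classical_set_scope.

Definition vnorm {R : realType} {n : nat} (v : 'cV[R]_n) : R :=
  Num.sqrt (\sum_(i < n) (v i ord0) ^+ 2).

Definition qform {R : realType} {n : nat} (M : 'M[R]_n) (x : 'cV[R]_n) : R :=
  ((x^T *m M *m x) ord0 ord0).

Definition sym_posdef {R : realType} {n : nat} (M : 'M[R]_n) : Prop :=
  M^T = M /\ forall x : 'cV[R]_n, x != 0 -> 0 < qform M x.

Definition affine_map {R : realType} {p a b : nat} (f : 'cV[R]_p -> 'M[R]_(a, b)) : Prop :=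
  exists (F0 : 'M[R]_(a, b)) (F : 'I_p -> 'M[R]_(a, b)),
    forall th : 'cV[R]_p, f th = F0 + \sum_(i < p) th i ord0 *: F i.

Definition stabilizable {R : realType} {n m : nat}
  (A : 'M[R]_n) (B : 'M[R]_(n, m)) : Prop :=
  exists K : 'M[R]_(m, n), forall x0 : 'cV[R]_n,
    (fun k : nat => vnorm (iter k (mulmx (A + B *m K)) x0)) @ \oo --> (0 : R).

Definition DARE {R : realType} {n m : nat} (A : 'M[R]_n) (B : 'M[R]_(n, m))
  (Q : 'M[R]_n) (Rm : 'M[R]_m) (P : 'M[R]_n) : Prop :=
  P = A^T *m P *m A
      - A^T *m P *m B *m invmx (Rm + B^T *m P *m B) *m B^T *m P *m A + Q.

Definition K_LQR {R : realType} {n m : nat} (A : 'M[R]_n) (B : 'M[R]_(n, m))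
  (Rm : 'M[R]_m) (P : 'M[R]_n) : 'M[R]_(m, n) :=
  - (invmx (Rm + B^T *m P *m B) *m B^T *m P *m A).

From HB Require Import structures.
From mathcomp Require Import all_boot all_order all_algebra.
From mathcomp Require Import all_classical all_reals all_analysis.
From mathcomp Require Import ring lra.
Import Order.TTheory GRing.Theory Num.Theory.
Import numFieldNormedType.Exports.
Local Open Scope ring_scope.
Local Open Scope classical_set_scope.

(* Completing the square in the Riccati equation shows that V(., th) decreases along
   the nominal closed loop of th by the stage cost, hence by at least
   lambda_min(Q) |x|^2, and Young's inequality absorbs the residual e + w.  For the
   change of parameter, if th' is close to th then (1 + s) P(th) is still a Lyapunov
   function for the closed loop of th' under the gain of th; comparing it with the
   Bellman inequality satisfied by P(th') gives P(th') <= P(th) + eta I.  Compactness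
   of Theta upgrades this to a uniform bound on P and to
   P(th') <= P(th) + (eta + L |th' - th|^2) I on all of Theta.  As
   |th_{k+1} - th_k|^2 <= mu |e + w|^2 and |x_{k+1}| <= X, the change of parameter
   costs at most eta |x_{k+1}|^2 + L mu X^2 |e + w|^2. *)

Section BilinearForm.
Context {R : realType}.

Definition bform {k l : nat} (M : 'M[R]_(k, l)) (a : 'cV[R]_k) (b : 'cV[R]_l) : R :=
  (a^T *m M *m b) ord0 ord0.

Lemma qformE {k} (M : 'M[R]_k) x : qform M x = bform M x x.
Proof. by []. Qed.

Lemma bformDl {k l} (M : 'M[R]_(k, l)) a a' b :
  bform M (a + a') b = bform M a b + bform M a' b.
Proof. by rewrite /bform linearD /= !mulmxDl mxE. Qed.

Lemma bformDr {k l} (M : 'M[R]_(k, l)) a b b' :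
  bform M a (b + b') = bform M a b + bform M a b'.
Proof. by rewrite /bform !mulmxDr mxE. Qed.

Lemma bformNl {k l} (M : 'M[R]_(k, l)) a b : bform M (- a) b = - bform M a b.
Proof. by rewrite /bform linearN /= !mulNmx mxE. Qed.

Lemma bformNr {k l} (M : 'M[R]_(k, l)) a b : bform M a (- b) = - bform M a b.
Proof. by rewrite /bform !mulmxN mxE. Qed.

Lemma bformZl {k l} (M : 'M[R]_(k, l)) c a b : bform M (c *: a) b = c * bform M a b.
Proof. by rewrite /bform linearZ /= -!scalemxAl mxE. Qed.

Lemma bformZr {k l} (M : 'M[R]_(k, l)) c a b : bform M a (c *: b) = c * bform M a b.
Proof. by rewrite /bform -!scalemxAr mxE. Qed.

Lemma bform0l {k l} (M : 'M[R]_(k, l)) b : bform M 0 b = 0.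
Proof. by rewrite /bform trmx0 !mul0mx mxE. Qed.

Lemma bform_addmx {k l} (M N : 'M[R]_(k, l)) a b :
  bform (M + N) a b = bform M a b + bform N a b.
Proof. by rewrite /bform mulmxDr mulmxDl mxE. Qed.

Lemma bform_oppmx {k l} (M : 'M[R]_(k, l)) a b : bform (- M) a b = - bform M a b.
Proof. by rewrite /bform mulmxN mulNmx mxE. Qed.

Lemma bform_mulmxl {k k' l} (F : 'M[R]_(k, k')) (M : 'M[R]_(k, l)) a b :
  bform M (F *m a) b = bform (F^T *m M) a b.
Proof. by rewrite /bform trmx_mul !mulmxA. Qed.

Lemma bform_mulmxr {k l l'} (G : 'M[R]_(l, l')) (M : 'M[R]_(k, l)) a b :
  bform M a (G *m b) = bform (M *m G) a b.
Proof. by rewrite /bform !mulmxA. Qed.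

Lemma bform_tr {k l} (M : 'M[R]_(k, l)) a b : bform M a b = bform M^T b a.
Proof.
by rewrite /bform -[in LHS](trmxK (a^T *m M *m b)) mxE !trmx_mul trmxK mulmxA.
Qed.

Lemma qformZ {k} (M : 'M[R]_k) c x : qform M (c *: x) = c ^+ 2 * qform M x.
Proof. by rewrite !qformE bformZl bformZr mulrA expr2. Qed.

Lemma qform0 {k} (M : 'M[R]_k) : qform M 0 = 0.
Proof. exact: bform0l. Qed.

Lemma qform_addmx {k} (M N : 'M[R]_k) x : qform (M + N) x = qform M x + qform N x.
Proof. exact: bform_addmx. Qed.

Lemma qform_congr {k l} (F : 'M[R]_(k, l)) (M : 'M[R]_k) y :
  qform M (F *m y) = qform (F^T *m M *m F) y.
Proof. by rewrite !qformE bform_mulmxl bform_mulmxr. Qed.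

End BilinearForm.

Section RiccatiCompletionOfSquares.
Context {R : realType} {n m : nat}.
Variables (A : 'M[R]_n) (B : 'M[R]_(n, m)) (Q : 'M[R]_n) (Rm : 'M[R]_m) (P : 'M[R]_n).
Hypotheses (P_sym : P^T = P) (Rm_sym : Rm^T = Rm).
Hypothesis M_unit : Rm + B^T *m P *m B \in unitmx.
Hypothesis P_dare : DARE A B Q Rm P.

Let M := Rm + B^T *m P *m B.
Let K := K_LQR A B Rm P.

Lemma lqr_gain_eq : M *m K = - (B^T *m P *m A).
Proof.
rewrite /K /K_LQR mulmxN -/M.
have -> : invmx M *m B^T *m P *m A = invmx M *m (B^T *m P *m A) by rewrite !mulmxA.
by rewrite mulKVmx.
Qed.

Lemma lqr_weight_sym : M^T = M.
Proof. by rewrite /M linearD /= Rm_sym !trmx_mul trmxK P_sym mulmxA. Qed.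

Lemma dare_gainE : P = A^T *m P *m A - K^T *m M *m K + Q.
Proof.
rewrite {1}P_dare; congr (_ - _ + _).
rewrite -[K^T *m M *m K]mulmxA lqr_gain_eq /K /K_LQR !linearN /= mulNmx opprK.
by rewrite !trmx_mul trmx_inv lqr_weight_sym P_sym trmxK !mulmxA.
Qed.

Lemma dare_completion_of_squares x v :
  qform P (A *m x + B *m v) + qform Q x + qform Rm v
  = qform P x + qform M (v - K *m x).
Proof.
set N := B^T *m P *m A.
have Px : bform P x x = bform (A^T *m P *m A) x x - bform (K^T *m M *m K) x x + bform Q x x.
  by rewrite {1}dare_gainE !bform_addmx bform_oppmx.
have PAB : bform P (A *m x) (B *m v) = bform N v x.
  by rewrite bform_mulmxl bform_mulmxr bform_tr !trmx_mul trmxK P_sym !mulmxA.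
have PBA : bform P (B *m v) (A *m x) = bform N v x by rewrite bform_mulmxl bform_mulmxr.
have MvK : bform M v (K *m x) = - bform N v x.
  by rewrite bform_mulmxr lqr_gain_eq bform_oppmx.
have MKv : bform M (K *m x) v = - bform N v x by rewrite bform_tr lqr_weight_sym MvK.
have MKK : bform M (K *m x) (K *m x) = bform (K^T *m M *m K) x x.
  by rewrite bform_mulmxl bform_mulmxr.
have Mvv : bform M v v = bform Rm v v + bform (B^T *m P *m B) v v by rewrite bform_addmx.
rewrite !qformE !bformDl !bformDr !bformNl !bformNr Px PAB PBA MvK MKv MKK Mvv.
rewrite !bform_mulmxl !bform_mulmxr.
ring.
Qed.

End RiccatiCompletionOfSquares.

Section Norms.
Context {R : realType}.

Definition mx_l1norm {k l : nat} (M : 'M[R]_(k, l)) : R := \sum_i \sum_j `|M i j|.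

Lemma mx_l1norm_ge0 {k l} (M : 'M[R]_(k, l)) : 0 <= mx_l1norm M.
Proof. by apply: sumr_ge0 => i _; apply: sumr_ge0. Qed.

Lemma vnorm_ge0 {k} (x : 'cV[R]_k) : 0 <= vnorm x.
Proof. exact: sqrtr_ge0. Qed.

Lemma vnorm_sqr {k} (x : 'cV[R]_k) : vnorm x ^+ 2 = \sum_i x i ord0 ^+ 2.
Proof. by rewrite /vnorm sqr_sqrtr // sumr_ge0 // => i _; rewrite sqr_ge0. Qed.

Lemma vnorm0 {k} : vnorm (0 : 'cV[R]_k) = 0.
Proof. by rewrite /vnorm big1 ?sqrtr0 // => i _; rewrite mxE expr0n. Qed.

Lemma vnormZ {k} c (x : 'cV[R]_k) : vnorm (c *: x) = `|c| * vnorm x.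
Proof.
rewrite /vnorm -sqrtr_sqr -sqrtrM ?sqr_ge0 // mulr_sumr; congr Num.sqrt.
by apply: eq_bigr => i _; rewrite mxE exprMn.
Qed.

Lemma vnorm_le_sqr {k} {x : 'cV[R]_k} {b} : vnorm x <= b -> vnorm x ^+ 2 <= b ^+ 2.
Proof. by move=> le_xb; rewrite ler_sqr ?nnegrE ?vnorm_ge0 // (le_trans (vnorm_ge0 x)). Qed.

Lemma entry_le_vnorm {k} (x : 'cV[R]_k) i : `|x i ord0| <= vnorm x.
Proof.
rewrite -ler_sqr ?nnegrE ?vnorm_ge0 // real_normK ?num_real // vnorm_sqr.
by rewrite (bigD1 i) //= lerDl sumr_ge0 // => j _; rewrite sqr_ge0.
Qed.

Lemma vnorm_eq0 {k} (x : 'cV[R]_k) : vnorm x = 0 -> x = 0.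
Proof.
move=> x0; apply/matrixP => i j; rewrite ord1 mxE.
by apply/eqP; rewrite -normr_le0 -x0 entry_le_vnorm.
Qed.

Lemma mx_norm_le_vnorm {k} (x : 'cV[R]_k) : `|x| <= vnorm x.
Proof.
rewrite [leLHS]/Num.norm /= mx_normrE; apply: bigmax_le => [|[i j] _ /=].
  exact: vnorm_ge0.
by rewrite ord1 entry_le_vnorm.
Qed.

Lemma entry_le_mx_norm {k l} (M : 'M[R]_(k, l)) i j : `|M i j| <= `|M|.
Proof.
rewrite [leRHS]/Num.norm /= mx_normrE.
exact: (le_bigmax _ (fun ij : 'I_k * 'I_l => `|M ij.1 ij.2|) (i, j)).
Qed.

Lemma vnorm_le_l1 {k} (x : 'cV[R]_k) : vnorm x <= \sum_i `|x i ord0|.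
Proof.
rewrite -ler_sqr ?nnegrE ?vnorm_ge0 ?sumr_ge0 // vnorm_sqr expr2 mulr_suml.
apply: ler_sum => i _; rewrite -real_normK ?num_real // expr2.
apply: ler_wpM2l => //; rewrite (bigD1 i) //= lerDl.
exact: sumr_ge0.
Qed.

Lemma vnorm_mulmx_le {k l} (F : 'M[R]_(k, l)) y : vnorm (F *m y) <= mx_l1norm F * vnorm y.
Proof.
apply: le_trans (vnorm_le_l1 _) _.
rewrite /mx_l1norm mulr_suml; apply: ler_sum => i _.
rewrite mxE mulr_suml; apply: le_trans (ler_norm_sum _ _ _) _.
apply: ler_sum => j _; rewrite normrM; apply: ler_wpM2l => //.
exact: entry_le_vnorm.
Qed.

Lemma qform_le_l1norm {k} (M : 'M[R]_k) x : qform M x <= mx_l1norm M * vnorm x ^+ 2.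
Proof.
rewrite /qform mxE.
have -> : \sum_j (x^T *m M) ord0 j * x j ord0 = \sum_j \sum_i x i ord0 * M i j * x j ord0.
  by apply: eq_bigr => j _; rewrite mxE mulr_suml; apply: eq_bigr => i _; rewrite mxE.
rewrite /mx_l1norm exchange_big mulr_suml; apply: ler_sum => i _.
rewrite mulr_suml; apply: ler_sum => j _.
apply: le_trans (ler_norm _) _.
rewrite !normrM [`|x i ord0| * _]mulrC -mulrA expr2.
by apply: ler_wpM2l => //; apply: ler_pM => //; exact: entry_le_vnorm.
Qed.

Lemma vnormD_sqr_le {k} (a b : 'cV[R]_k) :
  vnorm (a + b) ^+ 2 <= 2 * vnorm a ^+ 2 + 2 * vnorm b ^+ 2.
Proof.
rewrite !vnorm_sqr !mulr_sumr -big_split /=; apply: ler_sum => i _.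
by rewrite mxE; have := sqr_ge0 (a i ord0 - b i ord0); nra.
Qed.

Lemma qform_young {k} {P : 'M[R]_k} {tau} a b :
  P^T = P -> (forall y, 0 <= qform P y) -> 0 < tau ->
  qform P (a + b) <= (1 + tau) * qform P a + (1 + tau^-1) * qform P b.
Proof.
move=> P_sym P_psd tau_gt0.
have Pba : bform P b a = bform P a b by rewrite bform_tr P_sym.
have sq_ge0 := P_psd (tau *: a - b).
rewrite qformE !bformDl !bformDr !bformNl !bformNr !bformZl !bformZr Pba in sq_ge0.
rewrite !qformE !bformDl !bformDr Pba.
set aa := bform P a a in sq_ge0 *; set ab := bform P a b in sq_ge0 *.
set bb := bform P b b in sq_ge0 *.
suff : 0 <= tau * aa - 2 * ab + tau^-1 * bb by lra.
have -> : tau * aa - 2 * ab + tau^-1 * bb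
          = tau^-1 * (tau * (tau * aa) - tau * ab + (- (tau * ab) - - bb)).
  by field; rewrite gt_eqF.
by rewrite mulr_ge0 // invr_ge0 ltW.
Qed.

End Norms.

Section PositiveDefinite.
Context {R : realType}.

Lemma continuous_sum (T : topologicalType) (I : finType) (h : I -> T -> R) :
  (forall i, continuous (h i)) -> continuous (fun t => \sum_i h i t).
Proof.
move=> h_cont; suff sum_cont (s : seq I) : continuous (fun t => \sum_(i <- s) h i t).
  exact: sum_cont.
elim: s => [|a s IHs].
  have -> : (fun t => \sum_(i <- [::]) h i t) = cst 0 by apply: funext => t; rewrite big_nil.
  exact: cst_continuous.
have -> : (fun t => \sum_(i <- a :: s) h i t) = h a \+ (fun t => \sum_(i <- s) h i t).
  by apply: funext => t; rewrite big_cons.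
by move=> t; apply: continuousD; [exact: h_cont | exact: IHs].
Qed.

Lemma continuous_mul (T : topologicalType) (f g : T -> R) :
  continuous f -> continuous g -> continuous (fun t => f t * g t).
Proof. by move=> f_cont g_cont t; exact: (continuousM (f_cont t) (g_cont t)). Qed.

Lemma compact_rV_unit_sphere n : compact [set r : 'rV[R]_n | \sum_i r ord0 i ^+ 2 = 1].
Proof.
apply: bounded_closed_compact.
  exists 1; split; first by rewrite num_real.
  move=> b b_gt1 r r_unit /=.
  rewrite [leLHS]/Num.norm /= mx_normrE.
  apply: bigmax_le => [|[i j] _ /=]; first by rewrite ltW // (lt_trans _ b_gt1).
  rewrite (ord1 i); apply: le_trans (ltW b_gt1).
  have rj : `|r ord0 j| ^+ 2 <= 1.
    rewrite real_normK ?num_real // -r_unit (bigD1 j) //= lerDl.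
    by rewrite sumr_ge0 // => k _; exact: sqr_ge0.
  by rewrite -(expr1n _ 2) ler_pXn2r ?nnegrE in rj.
pose g (r : 'rV[R]_n) := \sum_i r ord0 i ^+ 2.
have g_cont : continuous g.
  apply: continuous_sum => i; under eq_fun do rewrite expr2.
  by apply: continuous_mul; exact: coord_continuous.
have -> : [set r | g r = 1] = g @^-1` [set x | x = 1] by [].
by apply: preimage_closed; [move=> r _; exact: g_cont | exact: closed_eq].
Qed.

Lemma posdef_min_sphere {n} (M : 'M[R]_n) : (forall x, x != 0 -> 0 < qform M x) ->
  exists2 c, 0 < c & forall y, vnorm y = 1 -> c <= qform M y.
Proof.
move=> M_pd.
have [[y0 y0_unit]|no_unit] := pselect (exists y : 'cV[R]_n, vnorm y = 1); last first.
  by exists 1 => // y y_unit; exfalso; apply: no_unit; exists y.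
pose S := [set r : 'rV[R]_n | \sum_i r ord0 i ^+ 2 = 1].
pose f (r : 'rV[R]_n) := qform M r^T.
have S_trmx (y : 'cV[R]_n) : S y^T = (vnorm y ^+ 2 = 1).
  by rewrite /S /= vnorm_sqr; congr (_ = 1); apply: eq_bigr => i _; rewrite mxE.
have f_cont : {within S, continuous f}.
  apply: continuous_subspaceT.
  have -> : f = fun r => \sum_j (\sum_i r ord0 i * M i j) * r ord0 j.
    apply: funext => r; rewrite /f /qform trmxK mxE; apply: eq_bigr => j _.
    by rewrite !mxE.
  apply: continuous_sum => j; apply: continuous_mul; last exact: coord_continuous.
  apply: continuous_sum => i; apply: continuous_mul; first exact: coord_continuous.
  exact: cst_continuous.
have S_cpt : compact S := compact_rV_unit_sphere n.
have [|c Sc c_min] := compact_EVT_min _ S_cpt f_cont.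
  by exists y0^T; rewrite S_trmx y0_unit expr1n.
exists (f c).
  apply: M_pd; apply/eqP => c0; move: Sc.
  by rewrite in_setE -[c]trmxK S_trmx c0 vnorm0 expr0n /= => /eqP; rewrite eq_sym oner_eq0.
move=> y y_unit; have := c_min y^T; rewrite /f trmxK; apply.
by rewrite in_setE S_trmx y_unit expr1n.
Qed.

Lemma posdef_lower_bound {n} (M : 'M[R]_n) : (forall x, x != 0 -> 0 < qform M x) ->
  exists2 c, 0 < c & forall x, c * vnorm x ^+ 2 <= qform M x.
Proof.
move=> M_pd; have [c c_gt0 c_min] := posdef_min_sphere M M_pd.
exists c => // x; have [->|x0] := eqVneq x 0; first by rewrite vnorm0 qform0 expr0n /= mulr0.
have v_gt0 : 0 < vnorm x.
  by rewrite lt_neqAle vnorm_ge0 andbT eq_sym; apply: contra_neq x0; exact: vnorm_eq0.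
have unit : vnorm ((vnorm x)^-1 *: x) = 1.
  by rewrite vnormZ ger0_norm ?invr_ge0 ?ltW // mulVf // gt_eqF.
have := c_min _ unit; rewrite qformZ -ler_pdivrMl ?exprn_gt0 ?invr_gt0 //.
by rewrite exprVn invrK mulrC.
Qed.

Lemma posdef_qform_ge0 {k} (M : 'M[R]_k) : sym_posdef M -> forall y, 0 <= qform M y.
Proof.
move=> [_ M_pd] y; have [->|y0] := eqVneq y 0; first by rewrite qform0.
exact/ltW/M_pd.
Qed.

Lemma posdef_unitmx {k} (M : 'M[R]_k) : (forall x, x != 0 -> 0 < qform M x) -> M \in unitmx.
Proof.
move=> M_pd; rewrite -row_free_unit -kermx_eq0; apply/rowV0Pn => -[v /sub_kermxP vM v0].
have := M_pd v^T; rewrite trmx_eq0 v0 qformE /bform trmxK vM mul0mx mxE ltxx.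
by move=> /(_ isT).
Qed.

End PositiveDefinite.

Section LyapunovComparison.
Context {R : realType}.

Lemma le0_geometric_bound {a C rho : R} : 0 <= rho < 1 ->
  (forall N : nat, a <= C * rho ^+ N) -> a <= 0.
Proof.
move=> /andP[rho_ge0 rho_lt1] a_le.
have geo : C * rho ^+ N @[N --> \oo] --> C * 0.
  by apply: cvgM; [exact: cvg_cst | apply: cvg_expr; rewrite ger0_norm].
rewrite mulr0 in geo; rewrite -(cvg_lim _ geo) //.
by apply: limr_ge; [exact: cvgP geo | exact: nearW].
Qed.

(* [V - W] does not decrease along [F], while [W] decays geometrically along [F]. *)
Lemma bellman_le_lyapunov {T : Type} {F : T -> T} {V W c N : T -> R} {q wmax vmax : R} :
  0 < q -> 0 <= wmax -> (forall y, 0 <= N y) ->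
  (forall y, V y <= V (F y) + c y) ->
  (forall y, W (F y) + c y <= W y) ->
  (forall y, q * N y <= c y) ->
  (forall y, 0 <= W y) -> (forall y, W y <= wmax * N y) ->
  (forall y, V y <= vmax * N y) ->
  forall y, V y <= W y.
Proof.
move=> q_gt0 wmax_ge0 N_ge0 V_bellman W_lyap c_ge W_ge0 W_le V_le y.
pose rho := 1 - q / (wmax + q).
have wq_gt0 : 0 < wmax + q by lra.
have rho_01 : 0 <= rho < 1.
  rewrite /rho subr_ge0 ler_pdivrMr // mul1r gtrBl divr_gt0 //=; lra.
have W_contr z : W (F z) <= rho * W z.
  have : q / (wmax + q) * W z <= q * N z.
    rewrite mulrAC ler_pdivrMr // -mulrA ler_pM2l //.
    apply: le_trans (W_le z) _; rewrite mulrC ler_wpM2l //.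
    by rewrite lerDl ltW.
  by have := W_lyap z; have := c_ge z; rewrite /rho; lra.
have iter_W k z : W (iter k F z) <= rho ^+ k * W z.
  elim: k => [|k IHk] /=; first by rewrite expr0 mul1r.
  apply: le_trans (W_contr _) _; rewrite exprS -mulrA ler_wpM2l //.
  by case/andP: rho_01.
have iter_gap k z : V z - W z <= V (iter k F z) - W (iter k F z).
  elim: k => [|k IHk] //=; apply: le_trans IHk _.
  by have := V_bellman (iter k F z); have := W_lyap (iter k F z); lra.
have gap_le z : V z - W z <= `|vmax| / q * W z.
  have qN : q * N z <= W z by have := W_lyap z; have := c_ge z; have := W_ge0 (F z); lra.
  have : V z <= `|vmax| / q * W z.
    apply: le_trans (V_le z) _; apply: le_trans (ler_wpM2r (N_ge0 z) (ler_norm vmax)) _.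
    by rewrite -mulrA ler_wpM2l // ler_pdivlMl.
  by have := W_ge0 z; lra.
rewrite -subr_le0; apply: (le0_geometric_bound (C := `|vmax| / q * W y) rho_01) => k.
apply: le_trans (iter_gap k y) _; apply: le_trans (gap_le _) _.
rewrite -[leRHS]mulrA [W y * _]mulrC.
by apply: ler_wpM2l; [rewrite divr_ge0 // ltW | exact: iter_W].
Qed.

End LyapunovComparison.

Section AffineMaps.
Context {R : realType}.

Lemma mx_l1norm_scale_sum {k l} (I : finType) (c : I -> R) (F : I -> 'M[R]_(k, l)) :
  mx_l1norm (\sum_i c i *: F i) <= \sum_i `|c i| * mx_l1norm (F i).
Proof.
apply: (@le_trans _ _ (\sum_a \sum_b \sum_i `|c i| * `|F i a b|)).
  apply: ler_sum => a _; apply: ler_sum => b _.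
  rewrite summxE; apply: le_trans (ler_norm_sum _ _ _) _.
  by apply: ler_sum => i _; rewrite mxE normrM.
under eq_bigr => a _ do rewrite exchange_big.
rewrite exchange_big le_eqVlt; apply/predU1l.
by apply: eq_bigr => i _; rewrite /mx_l1norm mulr_sumr; apply: eq_bigr => a _; rewrite mulr_sumr.
Qed.

Lemma affine_map_lipschitz {p k l} {f : 'cV[R]_p -> 'M[R]_(k, l)} : affine_map f ->
  exists2 L : R, 0 <= L & forall th th' z,
    vnorm ((f th' - f th) *m z) <= L * `|th' - th| * vnorm z.
Proof.
move=> [F0 [F fE]]; exists (\sum_i mx_l1norm (F i)).
  by apply: sumr_ge0 => i _; exact: mx_l1norm_ge0.
move=> th th' z; apply: le_trans (vnorm_mulmx_le (f th' - f th) z) _.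
apply: ler_wpM2r; first exact: vnorm_ge0.
have -> : f th' - f th = \sum_i (th' i ord0 - th i ord0) *: F i.
  rewrite !fE opprD addrACA subrr add0r -sumrB.
  by apply: eq_bigr => i _; rewrite scalerBl.
apply: le_trans (mx_l1norm_scale_sum _ _ _) _.
rewrite mulr_suml; apply: ler_sum => i _; rewrite mulrC.
apply: ler_wpM2l; first exact: mx_l1norm_ge0.
by have := entry_le_mx_norm (th' - th) i ord0; rewrite !mxE.
Qed.

End AffineMaps.

Section CompactUniformBound.
Context {R : realType} {V : normedModType R}.

Lemma compact_uniform_bound (S : set V) (bound : V -> R -> Prop) : compact S ->
  (forall t M M', M <= M' -> bound t M -> bound t M') ->
  (forall t, S t -> exists2 d, 0 < d &
     exists M, forall t', S t' -> `|t' - t| <= d -> bound t' M) ->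
  exists M, forall t, S t -> bound t M.
Proof.
move=> S_cpt bound_le local.
have /choice[dM dM_local] : forall t, exists dM : R * R, S t ->
    0 < dM.1 /\ forall t', S t' -> `|t' - t| <= dM.1 -> bound t' dM.2.
  move=> t; have [St|nSt] := pselect (S t); last by exists (1, 0).
  by have [d d_gt0 [M tM]] := local t St; exists (d, M).
rewrite compact_cover in S_cpt.
have [|D DS S_cover] := S_cpt _ S (fun t => ball t (dM t).1) (fun t _ => ball_open _ _).
  by move=> t St; exists t => //; apply: ballxx; exact: (dM_local t St).1.
exists (\sum_(i <- finmap.enum_fset D) `|(dM i).2|) => t St.
have [i iD ball_it] := S_cover t St.
have Si : S i by have := DS i iD; rewrite in_setE.
apply: bound_le ((dM_local i Si).2 t St _).
  apply: le_trans (ler_norm _) _; rewrite (bigD1_seq i) //= lerDl.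
  by apply: sumr_ge0 => j _.
by move: ball_it; rewrite -ball_normE /ball_ /= distrC => /ltW.
Qed.

End CompactUniformBound.

Section LQRFamily.
Context {R : realType} {n m p : nat}.
Context {A : 'cV[R]_p -> 'M[R]_n} {B : 'cV[R]_p -> 'M[R]_(n, m)}.
Context {Q : 'M[R]_n} {Rm : 'M[R]_m} {Theta : set 'cV[R]_p} {P : 'cV[R]_p -> 'M[R]_n}.
Hypotheses (Q_pd : sym_posdef Q) (Rm_pd : sym_posdef Rm).
Hypothesis P_dare : forall th, Theta th -> sym_posdef (P th) /\ DARE (A th) (B th) Q Rm (P th).
Context {qmin rmin LA LB : R}.
Hypotheses (qmin_gt0 : 0 < qmin) (rmin_gt0 : 0 < rmin) (LB_ge0 : 0 <= LB).
Hypothesis Q_ge : forall y, qmin * vnorm y ^+ 2 <= qform Q y.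
Hypothesis Rm_ge : forall v, rmin * vnorm v ^+ 2 <= qform Rm v.
Hypothesis A_lip : forall th th' z, vnorm ((A th' - A th) *m z) <= LA * `|th' - th| * vnorm z.
Hypothesis B_lip : forall th th' v, vnorm ((B th' - B th) *m v) <= LB * `|th' - th| * vnorm v.

Let K th := K_LQR (A th) (B th) Rm (P th).
Let closed_loop th (x : 'cV[R]_n) := A th *m x + B th *m (K th *m x).
Let stage_cost th (x : 'cV[R]_n) := qform Q x + qform Rm (K th *m x).

Lemma value_ge0 {th} : Theta th -> forall y, 0 <= qform (P th) y.
Proof. by move=> /P_dare[P_pd _]; exact: posdef_qform_ge0. Qed.

Lemma stage_cost_ge th x : qmin * vnorm x ^+ 2 <= stage_cost th x.
Proof.
apply: le_trans (Q_ge x) _; rewrite lerDl.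
exact: posdef_qform_ge0.
Qed.

Lemma lqr_bellman {th} : Theta th -> forall x v,
  qform (P th) (A th *m x + B th *m v) + qform Q x + qform Rm v
  = qform (P th) x + qform (Rm + (B th)^T *m P th *m B th) (v - K th *m x).
Proof.
move=> /[dup] th_in /P_dare[[P_sym P_pd] dare] x v.
apply: dare_completion_of_squares => //; first by case: Rm_pd.
apply: posdef_unitmx => z z0; rewrite qform_addmx -qform_congr.
by have := value_ge0 th_in (B th *m z); have := Rm_pd.2 _ z0; lra.
Qed.

Lemma lqr_bellman_le {th} : Theta th -> forall x v,
  qform (P th) x <= qform (P th) (A th *m x + B th *m v) + qform Q x + qform Rm v.
Proof.
move=> th_in x v; rewrite lqr_bellman // lerDl qform_addmx -qform_congr.
by rewrite addr_ge0 ?value_ge0 // posdef_qform_ge0.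
Qed.

Lemma lqr_bellman_eq {th} : Theta th -> forall x,
  qform (P th) x = qform (P th) (closed_loop th x) + stage_cost th x.
Proof. by move=> th_in x; rewrite addrA lqr_bellman // subrr qform0 addr0. Qed.

Lemma value_ge {th} : Theta th -> forall y, qmin * vnorm y ^+ 2 <= qform (P th) y.
Proof.
move=> th_in y; rewrite lqr_bellman_eq //; apply: le_trans (stage_cost_ge th y) _.
by rewrite lerDr value_ge0.
Qed.

Section LocalValueBound.
Context {Pb : R}.
Hypothesis Pb_gt0 : 0 < Pb.

Let value_le th := forall y, qform (P th) y <= Pb * vnorm y ^+ 2.

Lemma lqr_gain_le {th} : Theta th -> value_le th ->
  forall z, vnorm (K th *m z) ^+ 2 <= Pb / rmin * vnorm z ^+ 2.
Proof.
move=> th_in P_le z.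
rewrite mulrAC ler_pdivlMr // mulrC; apply: le_trans (Rm_ge _) _.
apply: le_trans (P_le z); rewrite (lqr_bellman_eq th_in) /stage_cost addrA lerDr.
by rewrite addr_ge0 ?value_ge0 // posdef_qform_ge0.
Qed.

Lemma closed_loop_perturbation {th} th' z : Theta th -> value_le th ->
  vnorm ((A th' + B th' *m K th) *m z - closed_loop th z) ^+ 2
  <= 2 * (LA ^+ 2 + LB ^+ 2 * Pb / rmin) * `|th' - th| ^+ 2 * vnorm z ^+ 2.
Proof.
move=> th_in P_le.
have -> : (A th' + B th' *m K th) *m z - closed_loop th z
          = (A th' - A th) *m z + (B th' - B th) *m (K th *m z).
  by rewrite /closed_loop mulmxDl -mulmxA !mulmxBl opprD addrACA.
apply: le_trans (vnormD_sqr_le _ _) _.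
have dA := vnorm_le_sqr (A_lip th th' z).
have dB := vnorm_le_sqr (B_lip th th' (K th *m z)).
have Kz := lqr_gain_le th_in P_le z.
rewrite !exprMn in dA dB.
have : LB ^+ 2 * `|th' - th| ^+ 2 * vnorm (K th *m z) ^+ 2
       <= LB ^+ 2 * `|th' - th| ^+ 2 * (Pb / rmin * vnorm z ^+ 2).
  by apply: ler_wpM2l; rewrite ?mulr_ge0 ?sqr_ge0.
have -> : 2 * (LA ^+ 2 + LB ^+ 2 * Pb / rmin) * `|th' - th| ^+ 2 * vnorm z ^+ 2
          = 2 * (LA ^+ 2 * `|th' - th| ^+ 2 * vnorm z ^+ 2)
            + 2 * (LB ^+ 2 * `|th' - th| ^+ 2 * (Pb / rmin * vnorm z ^+ 2)) by ring.
lra.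
Qed.

Lemma perturbed_closed_loop_le {th tau} th' z : Theta th -> value_le th -> 0 < tau ->
  qform (P th) ((A th' + B th' *m K th) *m z)
  <= (1 + tau) * qform (P th) (closed_loop th z)
     + (1 + tau^-1) * Pb * (2 * (LA ^+ 2 + LB ^+ 2 * Pb / rmin)) * `|th' - th| ^+ 2
       * vnorm z ^+ 2.
Proof.
move=> th_in P_le tau_gt0; set xc := closed_loop th z.
set E := (A th' + B th' *m K th) *m z - xc.
have -> : (A th' + B th' *m K th) *m z = xc + E by rewrite [RHS]addrC subrK.
apply: le_trans (qform_young xc E (P_dare _ th_in).1.1 (value_ge0 th_in) tau_gt0) _.
rewrite lerD2l.
have -> : (1 + tau^-1) * Pb * (2 * (LA ^+ 2 + LB ^+ 2 * Pb / rmin)) * `|th' - th| ^+ 2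
          * vnorm z ^+ 2
        = (1 + tau^-1) * (Pb * (2 * (LA ^+ 2 + LB ^+ 2 * Pb / rmin) * `|th' - th| ^+ 2
          * vnorm z ^+ 2)) by ring.
apply: ler_wpM2l; first by rewrite addr_ge0 // invr_ge0 ltW.
apply: le_trans (P_le E) _; apply: ler_wpM2l; first exact: ltW.
exact: closed_loop_perturbation.
Qed.

Lemma perturbed_closed_loop_lyapunov {s} : 0 < s ->
  exists2 delta, 0 < delta & forall th th' z, Theta th -> value_le th -> `|th' - th| <= delta ->
    (1 + s) * qform (P th) ((A th' + B th' *m K th) *m z) + stage_cost th z
    <= (1 + s) * qform (P th) z.
Proof.
move=> s_gt0.
pose tau := s * qmin / (2 * (1 + s) * Pb).
have tau_gt0 : 0 < tau by rewrite divr_gt0 ?mulr_gt0 //; lra.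
pose K1 := (1 + s) * (1 + tau^-1) * Pb * (2 * (LA ^+ 2 + LB ^+ 2 * Pb / rmin)).
have K1_ge0 : 0 <= K1.
  have LB_term : 0 <= LB ^+ 2 * Pb / rmin by rewrite divr_ge0 ?mulr_ge0 ?sqr_ge0 // ltW.
  have tauV : 0 <= 1 + tau^-1 by rewrite addr_ge0 // invr_ge0 ltW.
  apply: mulr_ge0; last by have := sqr_ge0 LA; lra.
  by apply: mulr_ge0; [apply: mulr_ge0 => //; lra | exact: ltW].
pose delta2 := s * qmin / 2 / (K1 + 1).
have delta2_gt0 : 0 < delta2 by rewrite !divr_gt0 ?mulr_gt0 //; lra.
have K1_delta2 : K1 * delta2 <= s * qmin / 2.
  rewrite /delta2 mulrA ler_pdivrMr; last by lra.
  by rewrite mulrC ler_wpM2l ?divr_ge0 ?mulr_ge0 ?ltW //; lra.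
exists (Num.sqrt delta2); first by rewrite sqrtr_gt0.
move=> th th' z th_in P_le near.
have near2 : `|th' - th| ^+ 2 <= delta2.
  by rewrite -(sqr_sqrtr (ltW delta2_gt0)) ler_sqr ?nnegrE ?sqrtr_ge0.
have pert := perturbed_closed_loop_le th' z th_in P_le tau_gt0.
have bellman := lqr_bellman_eq th_in z; have cost := stage_cost_ge th z.
have xc_le : qform (P th) (closed_loop th z) <= Pb * vnorm z ^+ 2.
  have := P_le z; rewrite bellman.
  by have := mulr_ge0 (ltW qmin_gt0) (sqr_ge0 (vnorm z)); lra.
have tau_term : (1 + s) * tau * qform (P th) (closed_loop th z) <= s * qmin / 2 * vnorm z ^+ 2.
  have -> : s * qmin / 2 * vnorm z ^+ 2 = (1 + s) * tau * (Pb * vnorm z ^+ 2).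
    by rewrite /tau; field; rewrite !gt_eqF //; lra.
  by apply: ler_wpM2l => //; rewrite mulr_ge0 ?ltW //; lra.
have gap_term : K1 * `|th' - th| ^+ 2 * vnorm z ^+ 2 <= s * qmin / 2 * vnorm z ^+ 2.
  apply: ler_wpM2r; first exact: sqr_ge0.
  by apply: le_trans K1_delta2; apply: ler_wpM2l.
have s_cost : s * qmin * vnorm z ^+ 2 <= s * stage_cost th z.
  by rewrite -mulrA; apply: ler_wpM2l; [exact: ltW | exact: cost].
have scaled_pert := ler_wpM2l (ltW (_ : 0 < 1 + s)) pert.
rewrite bellman; move: scaled_pert gap_term; rewrite /K1.
nra.
Qed.

Lemma value_le_near {eta} : 0 < eta ->
  exists2 delta, 0 < delta & forall th th', Theta th -> Theta th' -> value_le th ->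
    `|th' - th| <= delta -> forall y, qform (P th') y <= qform (P th) y + eta * vnorm y ^+ 2.
Proof.
move=> eta_gt0; pose s := eta / Pb; have s_gt0 : 0 < s by rewrite divr_gt0.
have [delta delta_gt0 lyap] := perturbed_closed_loop_lyapunov s_gt0.
exists delta => // th th' th_in th'_in P_le near y.
have P_ge0 := value_ge0 th_in.
apply: le_trans (_ : _ <= (1 + s) * qform (P th) y) _.
  apply: (bellman_le_lyapunov (F := mulmx (A th' + B th' *m K th)) (V := qform (P th'))
    (W := fun z => (1 + s) * qform (P th) z) (c := stage_cost th)
    (N := fun z => vnorm z ^+ 2) (wmax := (1 + s) * Pb) (vmax := mx_l1norm (P th')) qmin_gt0).
  - by rewrite mulr_ge0 // ltW //; lra.
  - by move=> z; exact: sqr_ge0.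
  - move=> z; rewrite addrA mulmxDl -mulmxA.
    exact: lqr_bellman_le.
  - by move=> z; exact: lyap th_in P_le near.
  - exact: stage_cost_ge.
  - by move=> z; rewrite mulr_ge0 //; lra.
  - by move=> z; rewrite -mulrA ler_wpM2l ?P_le //; lra.
  - by move=> z; exact: qform_le_l1norm.
rewrite mulrDl mul1r lerD2l /s -mulrA ler_pM2l // mulrC ler_pdivrMr // mulrC.
exact: P_le.
Qed.

End LocalValueBound.

Lemma value_bounded : compact Theta -> exists2 Pmax, 0 < Pmax &
  forall th, Theta th -> forall y, qform (P th) y <= Pmax * vnorm y ^+ 2.
Proof.
move=> Theta_compact.
have [Pmax Pmax_bound] : exists Pmax, forall th, Theta th ->
    forall y, qform (P th) y <= Pmax * vnorm y ^+ 2.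
  apply: compact_uniform_bound => // [th Pm Pm' le_Pm P_le y|th th_in].
    by apply: le_trans (P_le y) _; rewrite ler_wpM2r ?sqr_ge0.
  pose Pb := mx_l1norm (P th) + 1.
  have Pb_gt0 : 0 < Pb by rewrite ltr_wpDl ?mx_l1norm_ge0.
  have P_le y : qform (P th) y <= Pb * vnorm y ^+ 2.
    apply: le_trans (qform_le_l1norm _ _) _.
    by rewrite ler_wpM2r ?sqr_ge0 // lerDl.
  have [delta delta_gt0 near] := value_le_near Pb_gt0 ltr01.
  exists delta => //; exists (Pb + 1) => th' th'_in th'_near y.
  by apply: le_trans (near _ _ th_in th'_in P_le th'_near y) _; rewrite mulrDl mul1r lerD2r.
exists (Num.max Pmax 1); first by rewrite lt_max ltr01 orbT.
move=> th th_in y; apply: le_trans (Pmax_bound _ th_in y) _.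
by rewrite ler_wpM2r ?sqr_ge0 // le_max lexx.
Qed.

Section UniformValueBound.
Context {Pmax : R}.
Hypothesis Pmax_gt0 : 0 < Pmax.
Hypothesis P_le_max : forall th, Theta th -> forall y, qform (P th) y <= Pmax * vnorm y ^+ 2.

Lemma value_modulus {eta} : 0 < eta -> exists2 L, 0 <= L & forall th th', Theta th -> Theta th' ->
  forall y, qform (P th') y <= qform (P th) y + (eta + L * `|th' - th| ^+ 2) * vnorm y ^+ 2.
Proof.
move=> eta_gt0; have [delta delta_gt0 near] := value_le_near Pmax_gt0 eta_gt0.
have L_ge0 : 0 <= Pmax / delta ^+ 2 by rewrite divr_ge0 ?sqr_ge0 ?ltW.
exists (Pmax / delta ^+ 2) => // th th' th_in th'_in y.
have gap_ge0 : 0 <= Pmax / delta ^+ 2 * `|th' - th| ^+ 2 * vnorm y ^+ 2.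
  by apply: mulr_ge0; [apply: mulr_ge0 | exact: sqr_ge0].
have [close|far] := leP `|th' - th| delta.
  apply: le_trans (near _ _ th_in th'_in (P_le_max _ th_in) close y) _.
  by rewrite lerD2l mulrDl lerDl.
have Pmax_le : Pmax <= Pmax / delta ^+ 2 * `|th' - th| ^+ 2.
  rewrite mulrAC ler_pdivlMr ?exprn_gt0 //; apply: ler_wpM2l; first exact: ltW.
  by rewrite ler_sqr ?nnegrE ?(ltW delta_gt0) // ltW.
have := P_le_max _ th'_in y; have := value_ge0 th_in y.
have := ler_wpM2r (sqr_ge0 (vnorm y)) Pmax_le; have := mulr_ge0 (ltW eta_gt0) (sqr_ge0 (vnorm y)).
by rewrite mulrDl; lra.
Qed.

Lemma closed_loop_sqr_le {th} x : Theta th ->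
  vnorm (closed_loop th x) ^+ 2 <= Pmax / qmin * vnorm x ^+ 2.
Proof.
move=> th_in; rewrite mulrAC ler_pdivlMr // mulrC.
apply: le_trans (value_ge th_in _) _; apply: le_trans (P_le_max _ th_in x).
rewrite (lqr_bellman_eq th_in x) lerDl; apply: le_trans _ (stage_cost_ge th x).
by rewrite mulr_ge0 ?sqr_ge0 // ltW.
Qed.

Lemma closed_loop_value_step {th} x d : Theta th ->
  qform (P th) (closed_loop th x + d) - qform (P th) x
  <= - (3 / 4 * qmin) * vnorm x ^+ 2 + (1 + 4 * Pmax / qmin) * Pmax * vnorm d ^+ 2.
Proof.
move=> th_in; pose eps := qmin / (4 * Pmax).
have eps_gt0 : 0 < eps by rewrite divr_gt0 ?mulr_gt0.
have young := qform_young (closed_loop th x) d (P_dare _ th_in).1.1 (value_ge0 th_in) eps_gt0.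
have decrease : qform (P th) (closed_loop th x) <= qform (P th) x - qmin * vnorm x ^+ 2.
  by rewrite (lqr_bellman_eq th_in x) -addrA lerDl subr_ge0 stage_cost_ge.
have Px := P_le_max _ th_in x; have Pd := P_le_max _ th_in d.
have epsV : eps^-1 = 4 * Pmax / qmin by rewrite /eps invf_div.
have eps_Px : eps * qform (P th) x <= qmin / 4 * vnorm x ^+ 2.
  have -> : qmin / 4 * vnorm x ^+ 2 = eps * (Pmax * vnorm x ^+ 2).
    by rewrite /eps; field; rewrite !gt_eqF.
  by apply: ler_wpM2l; [exact: ltW | exact: Px].
have eps_v : 0 <= eps * (qmin * vnorm x ^+ 2).
  by apply: mulr_ge0; [exact: ltW | rewrite mulr_ge0 ?sqr_ge0 // ltW].
have epsV_Pd : (1 + eps^-1) * qform (P th) d <= (1 + 4 * Pmax / qmin) * Pmax * vnorm d ^+ 2.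
  rewrite -epsV -mulrA; apply: ler_wpM2l => //.
  by rewrite addr_ge0 // invr_ge0 ltW.
have : (1 + eps) * qform (P th) (closed_loop th x)
       <= (1 + eps) * (qform (P th) x - qmin * vnorm x ^+ 2).
  by apply: ler_wpM2l => //; rewrite addr_ge0 // ltW.
nra.
Qed.

Lemma value_step_bound mu X : 0 <= mu ->
  exists2 alpha, 0 < alpha & exists2 C, 0 <= C &
    forall th th' x d, Theta th -> Theta th' ->
      `|th' - th| ^+ 2 <= mu * vnorm d ^+ 2 -> vnorm (closed_loop th x + d) <= X ->
      qform (P th') (closed_loop th x + d) - qform (P th) x
      <= - alpha * vnorm x ^+ 2 + C * vnorm d ^+ 2.
Proof.
move=> mu_ge0; pose eta := qmin ^+ 2 / (8 * Pmax).
have eta_gt0 : 0 < eta by rewrite divr_gt0 ?exprn_gt0 ?mulr_gt0.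
have [L L_ge0 modulus] := value_modulus eta_gt0.
pose C1 := (1 + 4 * Pmax / qmin) * Pmax.
have C1_ge0 : 0 <= C1.
  by rewrite mulr_ge0 ?addr_ge0 ?divr_ge0 ?mulr_ge0 // ltW.
exists (qmin / 2); first by rewrite divr_gt0.
exists (C1 + 2 * eta + L * mu * X ^+ 2).
  by have := mulr_ge0 (mulr_ge0 L_ge0 mu_ge0) (sqr_ge0 X); have := ltW eta_gt0; lra.
move=> th th' x d th_in th'_in step z_le; set z := closed_loop th x + d.
have fixed := closed_loop_value_step x d th_in; rewrite -/C1 in fixed.
have change := modulus th th' th_in th'_in z; rewrite mulrDl in change.
have z_sqr : vnorm z ^+ 2 <= 2 * (Pmax / qmin * vnorm x ^+ 2) + 2 * vnorm d ^+ 2.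
  by apply: le_trans (vnormD_sqr_le _ _) _; have := closed_loop_sqr_le x th_in; lra.
have eta_z : eta * vnorm z ^+ 2 <= qmin / 4 * vnorm x ^+ 2 + 2 * eta * vnorm d ^+ 2.
  have -> : qmin / 4 * vnorm x ^+ 2 + 2 * eta * vnorm d ^+ 2
            = eta * (2 * (Pmax / qmin * vnorm x ^+ 2) + 2 * vnorm d ^+ 2).
    by rewrite /eta; field; rewrite !gt_eqF.
  by apply: ler_wpM2l => //; exact: ltW.
have L_z : L * `|th' - th| ^+ 2 * vnorm z ^+ 2 <= L * mu * X ^+ 2 * vnorm d ^+ 2.
  have -> : L * mu * X ^+ 2 * vnorm d ^+ 2 = L * (mu * vnorm d ^+ 2 * X ^+ 2) by ring.
  rewrite -mulrA; apply: ler_wpM2l => //.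
  by apply: ler_pM; [exact: sqr_ge0 | exact: sqr_ge0 | exact: step | exact: vnorm_le_sqr].
by lra.
Qed.

End UniformValueBound.

Lemma lqr_value_step_bound mu X : compact Theta -> 0 <= mu ->
  exists2 alpha, 0 < alpha & exists2 C, 0 <= C &
    forall th th' x d, Theta th -> Theta th' ->
      `|th' - th| ^+ 2 <= mu * vnorm d ^+ 2 -> vnorm (closed_loop th x + d) <= X ->
      qform (P th') (closed_loop th x + d) - qform (P th) x
      <= - alpha * vnorm x ^+ 2 + C * vnorm d ^+ 2.
Proof.
move=> Theta_cpt mu_ge0; have [Pmax Pmax_gt0 P_le] := value_bounded Theta_cpt.
exact: value_step_bound Pmax_gt0 P_le mu X mu_ge0.
Qed.

End LQRFamily.

Theorem proposition2 (R : realType) (n m p : nat)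
  (hn : (0 < n)%N) (hm : (0 < m)%N) (hp : (0 < p)%N)
  (A : 'cV[R]_p -> 'M[R]_n) (B : 'cV[R]_p -> 'M[R]_(n, m))
  (Q : 'M[R]_n) (Rm : 'M[R]_m)
  (Theta : set 'cV[R]_p)
  (P : 'cV[R]_p -> 'M[R]_n)
  (Wbar mu X : R)
  (x : nat -> 'cV[R]_n) (u : nat -> 'cV[R]_m) (w : nat -> 'cV[R]_n)
  (theta thetahat : nat -> 'cV[R]_p) :
  affine_map A -> affine_map B ->
  sym_posdef Q -> sym_posdef Rm ->
  compact Theta -> convex_set Theta ->
  (forall th, Theta th -> stabilizable (A th) (B th)) ->
  (* P(theta) is the (unique) positive definite solution of the DARE *)
  (forall th, Theta th -> sym_posdef (P th) /\ DARE (A th) (B th) Q Rm (P th)) ->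
  (* dynamics *)
  (forall k, x k.+1 = A (theta k) *m x k + B (theta k) *m u k + w k) ->
  (* (i) bounded disturbance *)
  0 <= Wbar -> (forall k, vnorm (w k) <= Wbar) ->
  (* (ii) parameters in Theta *)
  (forall k, Theta (theta k)) ->
  0 < mu ->
  (forall k, Theta (thetahat k)) ->
  (* certainty-equivalent LQR input *)
  (forall k, u k = K_LQR (A (thetahat k)) (B (thetahat k)) Rm (P (thetahat k)) *m x k) ->
  (* estimate update bound, with e_{1|k} = x_{k+1} - xhat_{1|k} - w_k *)
  (forall k,
     let xhat := A (thetahat k) *m x k + B (thetahat k) *m u k in
     let e := x k.+1 - xhat - w k in
     vnorm (thetahat k.+1 - thetahat k) <= Num.sqrt mu * vnorm (e + w k)) ->
  (* uniformly bounded state *)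
  0 < X -> (forall k, vnorm (x k) <= X) ->
  exists alpha beta gamma : R, 0 < alpha /\ 0 < beta /\ 0 < gamma /\
    forall k,
      let xhat := A (thetahat k) *m x k + B (thetahat k) *m u k in
      let e := x k.+1 - xhat - w k in
      qform (P (thetahat k.+1)) (x k.+1) - qform (P (thetahat k)) (x k)
        <= - alpha * vnorm (x k) ^+ 2 + beta * vnorm e ^+ 2
           + gamma * vnorm (w k) ^+ 2.
Proof.
move=> A_aff B_aff Q_pd Rm_pd Theta_cpt _ _ P_dare _ _ _ _ mu_gt0 thetahat_in u_lqr
  estimate_step _ x_le.
have [qmin qmin_gt0 Q_ge] := posdef_lower_bound Q Q_pd.2.
have [rmin rmin_gt0 Rm_ge] := posdef_lower_bound Rm Rm_pd.2.
have [LA _ A_lip] := affine_map_lipschitz A_aff.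
have [LB LB_ge0 B_lip] := affine_map_lipschitz B_aff.
have [alpha alpha_gt0 [C C_ge0 step]] := lqr_value_step_bound Q_pd Rm_pd P_dare qmin_gt0
  rmin_gt0 LB_ge0 Q_ge Rm_ge A_lip B_lip mu X Theta_cpt (ltW mu_gt0).
exists alpha, (2 * C + 1), (2 * C + 1).
have C_gt0 : 0 < 2 * C + 1 by lra.
do 3!split => //.
move=> k /=; set e := x k.+1 - _ - w k.
have x_next : x k.+1 = A (thetahat k) *m x k
    + B (thetahat k) *m (K_LQR (A (thetahat k)) (B (thetahat k)) Rm (P (thetahat k)) *m x k)
    + (e + w k).
  by rewrite -u_lqr /e subrK addrC subrK.
have param_step : `|thetahat k.+1 - thetahat k| ^+ 2 <= mu * vnorm (e + w k) ^+ 2.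
  have le_step := le_trans (mx_norm_le_vnorm _) (estimate_step k).
  rewrite -(sqr_sqrtr (ltW mu_gt0)) -exprMn ler_sqr ?nnegrE //.
  exact: le_trans (normr_ge0 _) le_step.
have := step _ _ (x k) _ (thetahat_in k) (thetahat_in k.+1) param_step.
rewrite -x_next => /(_ (x_le k.+1)) bound.
apply: le_trans bound _.
have := ler_wpM2l C_ge0 (vnormD_sqr_le e (w k)).
by have := sqr_ge0 (vnorm e); have := sqr_ge0 (vnorm (w k)); lra.
Qed.
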